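(* For $0<p<1$ let $f(k,p)=\frac{-1}{\log(1-p)}\frac{p^k}{k}$, $k\ge1$, be the logarithmic probability mass function. Let $X$ have pmf $f(\cdot,p)$ and $Y$ have pmf $f(\cdot,q)$ with $0<p,q<1$. Then $X\le_{st}Y$ if and only if $p\le q$, and $X\le_{wd}Y$ if and only if $p\le q$.
   Context: For a real random variable $X$, its Lévy concentration function is $Q_X(\varepsilon)=\sup_{x_0\in\mathbb{R}}\Pr\{X\in[x_0,x_0+\varepsilon]\}$, $\varepsilon>0$. For random variables $X,Y$, write $X\le_{wd}Y$ if $Q_X(\varepsilon)\ge Q_Y(\varepsilon)$ for all $\varepsilon>0$. $X\le_{st}Y$ denotes the usual stochastic order: $\Pr(X>t)\le\Pr(Y>t)$ for all $t$. *)

From Stdlib Require Import Reals ClassicalEpsilon.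
From Coquelicot Require Import Coquelicot.
Open Scope R_scope.

Definition logpmf (p : R) (k : nat) : R :=
  match k with
  | O => 0
  | S _ => (-1 / ln (1 - p)) * (p ^ k / INR k)
  end.

Definition prob (f : nat -> R) (A : R -> Prop) : R :=
  Series (fun k => if excluded_middle_informative (A (INR k)) then f k else 0).

Definition conc (f : nat -> R) (eps : R) : Rbar :=
  Lub_Rbar (fun r => exists x0 : R, r = prob f (fun x => x0 <= x <= x0 + eps)).

Definition wd_le (f g : nat -> R) : Prop :=
  forall eps : R, 0 < eps -> Rbar_le (conc g eps) (conc f eps).

Definition st_le (f g : nat -> R) : Prop :=
  forall t : R, prob f (fun x => t < x) <= prob g (fun x => t < x).

From Stdlib Require Import Reals Lra Lia ClassicalEpsilon.
From Coquelicot Require Import Coquelicot.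
Open Scope R_scope.

(* The pmf of parameter q is an exponential tilt of the one of parameter p:
   f(k,q) = c (q/p)^k f(k,p).  A tilt by a ratio q/p >= 1 moves mass to the
   right, which gives the stochastic order.  The logarithmic pmf is
   nonincreasing on {1,2,...}, so the most concentrated window of length eps
   is [1, 1+eps] and Q_X(eps) is the distribution function at 1+eps; hence
   the dispersive order is the stochastic order read at the points t > 1.
   Conversely, comparable distribution functions in both directions agree at
   3/2 and 5/2, which pins down f(1,p) and f(2,p) = p/2 f(1,p), hence p. *)

Lemma Series_zero : Series (fun _ => 0) = 0.
Proof.
  rewrite (Series_ext _ (fun _ => 0 * 0)) by (intros; ring).
  rewrite (Series_scal_l 0 (fun _ => 0)); ring.
Qed.

Definition log_coef (k : nat) : R := match k with O => 0 | S _ => / INR k end.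

Lemma log_coef_ge0 k : 0 <= log_coef k.
Proof.
  destruct k; unfold log_coef; [lra|].
  apply Rlt_le, Rinv_0_lt_compat, lt_0_INR; lia.
Qed.

Lemma PS_derive_log_coef n : PS_derive log_coef n = 1.
Proof. unfold PS_derive, log_coef; field; apply not_0_INR; lia. Qed.

Lemma CV_radius_log_coef : CV_radius log_coef = 1.
Proof.
  rewrite <- CV_radius_derive, (CV_radius_ext _ (fun _ => 1)) by apply PS_derive_log_coef.
  replace (Finite 1) with (Finite (/ 1)) by (f_equal; field).
  apply CV_radius_finite_DAlembert; [intros; lra | lra |].
  eapply is_lim_seq_ext; [| apply is_lim_seq_const].
  intros n; simpl; unfold Rdiv; rewrite Rinv_1, Rmult_1_r, Rabs_R1; reflexivity.
Qed.

(* Both sides vanish at 0 and have derivative 1/(1-x) = sum x^k on [0,1). *)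
Lemma PSeries_log_coef x : 0 <= x < 1 -> PSeries log_coef x = - ln (1 - x).
Proof.
  intros Hx.
  assert (Hconst := eq_is_derive (fun t => PSeries log_coef t + ln (1 - t)) 0 x).
  simpl in Hconst; rewrite PSeries_0, Rminus_0_r, ln_1 in Hconst; simpl in Hconst.
  enough (0 + 0 = PSeries log_coef x + ln (1 - x)) by lra.
  destruct (Req_dec x 0) as [->|Hx0].
  { rewrite PSeries_0, Rminus_0_r, ln_1; simpl; ring. }
  apply Hconst; [| lra].
  intros t Ht.
  assert (Hrad : Rbar_lt (Rabs t) (CV_radius log_coef)).
  { rewrite CV_radius_log_coef; simpl; rewrite Rabs_pos_eq; lra. }
  assert (Hgeom : PSeries (PS_derive log_coef) t = / (1 - t)).
  { unfold PSeries; rewrite (Series_ext _ (fun k => t ^ k)).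
    - apply is_series_unique, is_series_geom; rewrite Rabs_pos_eq; lra.
    - intros k; rewrite PS_derive_log_coef; ring. }
  assert (Hd : is_derive (fun s => PSeries log_coef s + ln (1 - s)) t
                 (PSeries (PS_derive log_coef) t + - / (1 - t))).
  { apply (@is_derive_plus R_AbsRing).
    - apply is_derive_PSeries; exact Hrad.
    - auto_derive; [lra | field; lra]. }
  rewrite Hgeom, Rplus_opp_r in Hd; exact Hd.
Qed.

Definition restrict (f : nat -> R) (A : R -> Prop) (k : nat) : R :=
  if excluded_middle_informative (A (INR k)) then f k else 0.

Lemma prob_restrict f A : prob f A = Series (restrict f A).
Proof. reflexivity. Qed.

Definition cdf (f : nat -> R) (t : R) : R := prob f (fun x => x <= t).

Lemma prob_ext f (A B : R -> Prop) : (forall x, A x <-> B x) -> prob f A = prob f B.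
Proof.
  intros HAB; apply Series_ext; intros k.
  do 2 destruct excluded_middle_informative; firstorder.
Qed.

Section Pmf.

Variable f : nat -> R.
Hypothesis f_ge0 : forall k, 0 <= f k.
Hypothesis f_ex : ex_series f.

Lemma restrict_bounds A k : 0 <= restrict f A k <= f k.
Proof. pose proof (f_ge0 k); unfold restrict; destruct excluded_middle_informative; lra. Qed.

Lemma ex_series_restrict A : ex_series (restrict f A).
Proof.
  apply (@ex_series_le R_AbsRing R_CompleteNormedModule _ f); auto.
  intros k; pose proof (restrict_bounds A k).
  change norm with Rabs; simpl; rewrite Rabs_pos_eq; lra.
Qed.

Lemma prob_ge0 A : 0 <= prob f A.
Proof.
  rewrite prob_restrict, <- Series_zero.
  apply Series_le; [| apply ex_series_restrict].
  intros k; pose proof (restrict_bounds A k); lra.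
Qed.

Lemma prob_add_compl A : prob f A + prob f (fun x => ~ A x) = Series f.
Proof.
  rewrite !prob_restrict, <- Series_plus by apply ex_series_restrict.
  apply Series_ext; intros k; unfold restrict.
  do 2 destruct excluded_middle_informative; tauto || lra.
Qed.

Lemma prob_gt_add_cdf t : prob f (fun x => t < x) + cdf f t = Series f.
Proof.
  rewrite <- (prob_add_compl (fun x => t < x)); unfold cdf; f_equal.
  apply prob_ext; intros x; split; [apply Rle_not_lt | apply Rnot_lt_le].
Qed.

Lemma cdf_partial_sum n t : INR n <= t < INR n + 1 -> cdf f t = sum_f_R0 f n.
Proof.
  intros Ht; unfold cdf; rewrite prob_restrict, (Series_incr_n _ (S n)) by (lia || apply ex_series_restrict).
  simpl pred; rewrite (Series_ext _ (fun _ => 0)), Series_zero, Rplus_0_r.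
  - apply sum_eq; intros i Hi; unfold restrict.
    destruct excluded_middle_informative as [|Hout]; [reflexivity|].
    apply le_INR in Hi; lra.
  - intros k; unfold restrict; destruct excluded_middle_informative as [Hin|]; [|reflexivity].
    rewrite plus_INR, S_INR in Hin; pose proof (pos_INR k); lra.
Qed.

End Pmf.

Lemma prob_scal_le (f g : nat -> R) (a b : R) A :
  (forall k, 0 <= f k) -> (forall k, 0 <= g k) -> ex_series f -> 0 <= a ->
  (forall k, A (INR k) -> a * g k <= b * f k) -> a * prob g A <= b * prob f A.
Proof.
  intros f_ge0 g_ge0 f_ex Ha Hab; rewrite !prob_restrict, <- !Series_scal_l.
  apply Series_le.
  - intros k; unfold restrict; destruct excluded_middle_informative as [Hk|]; [|lra].
    split; [apply Rmult_le_pos; auto | apply Hab, Hk].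
  - apply (@ex_series_scal_l R_AbsRing), ex_series_restrict; assumption.
Qed.

Section TwoPmfs.

Variables f g : nat -> R.
Hypothesis f_ge0 : forall k, 0 <= f k.
Hypothesis g_ge0 : forall k, 0 <= g k.
Hypothesis f_ex : ex_series f.
Hypothesis g_ex : ex_series g.
Hypothesis same_mass : Series g = Series f.

Lemma st_le_iff_cdf : st_le f g <-> forall t, cdf g t <= cdf f t.
Proof.
  unfold st_le; split; intros H t; specialize (H t);
    pose proof (prob_gt_add_cdf f f_ge0 f_ex t); pose proof (prob_gt_add_cdf g g_ge0 g_ex t); lra.
Qed.

(* The threshold r = c rho^t separates where the tilted pmf g lies below and
   above r f; since both have the same mass, one of the two comparisons
   forces cdf g t <= cdf f t. *)
Lemma cdf_le_of_exp_tilt (c rho : R) : 0 < c -> 1 <= rho ->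
  (forall k, g k = c * rho ^ k * f k) -> forall t, cdf g t <= cdf f t.
Proof.
  intros Hc Hrho Htilt t.
  set (r := c * Rpower rho t).
  assert (Hr : 0 < r) by (unfold r, Rpower; pose proof (exp_pos (t * ln rho)); nra).
  assert (Hpow : forall k, rho ^ k = Rpower rho (INR k)) by (intros; rewrite Rpower_pow; lra).
  assert (Hbelow : 1 * cdf g t <= r * cdf f t).
  { apply prob_scal_le; [assumption.. | lra |]; intros k Hk.
    rewrite Htilt, Hpow; pose proof (f_ge0 k).
    assert (Rpower rho (INR k) <= Rpower rho t) by (apply Rle_Rpower; lra).
    unfold r; rewrite Rmult_1_l; apply Rmult_le_compat_r, Rmult_le_compat_l; lra. }
  assert (Habove : r * prob f (fun x => t < x) <= 1 * prob g (fun x => t < x)).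
  { apply prob_scal_le; [assumption.. | lra |]; intros k Hk.
    rewrite Htilt, Hpow; pose proof (f_ge0 k).
    assert (Rpower rho t <= Rpower rho (INR k)) by (apply Rle_Rpower; lra).
    unfold r; rewrite Rmult_1_l; apply Rmult_le_compat_r, Rmult_le_compat_l; lra. }
  pose proof (prob_gt_add_cdf f f_ge0 f_ex t); pose proof (prob_gt_add_cdf g g_ge0 g_ex t).
  pose proof (prob_ge0 f f_ge0 f_ex (fun x => x <= t)).
  pose proof (prob_ge0 f f_ge0 f_ex (fun x => t < x)).
  unfold cdf in *; destruct (Rle_lt_dec r 1); nra.
Qed.

End TwoPmfs.

Lemma nat_window_start (x0 : R) :
  exists s : nat, (s = 0%nat \/ INR s < x0) /\ x0 <= INR s + 1.
Proof.
  destruct (INR_unbounded x0) as [N HN].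
  assert (Hlow : x0 <= INR N) by lra; clear HN.
  induction N as [|N IH].
  - exists 0%nat; simpl in *; split; [auto | lra].
  - destruct (Rle_lt_dec x0 (INR N)); [apply IH; auto|].
    exists N; rewrite S_INR in Hlow; split; [auto | lra].
Qed.

Section NonincreasingPmf.

Variable f : nat -> R.
Hypothesis f_ge0 : forall k, 0 <= f k.
Hypothesis f_ex : ex_series f.
Hypothesis f_0 : f 0%nat = 0.
Hypothesis f_step : forall k, (1 <= k)%nat -> f (S k) <= f k.

Lemma shift_le_of_step s k : (1 <= k)%nat -> f (s + k) <= f k.
Proof.
  intros Hk; induction s as [|s IH]; [apply Rle_refl|].
  simpl; apply (Rle_trans _ (f (s + k)%nat)); [apply f_step; lia | exact IH].
Qed.

(* Shifting a window [x0, x0 + eps] down by the integer s puts its support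
   points inside [1, 1 + eps]; the point 0 only carries the mass f 0 = 0. *)
Lemma prob_window_le (x0 eps : R) :
  prob f (fun x => x0 <= x <= x0 + eps) <= prob f (fun x => 1 <= x <= 1 + eps).
Proof.
  destruct (nat_window_start x0) as [s [Hs Hx0]].
  rewrite !prob_restrict, (Series_incr_n_aux _ s).
  2:{ intros k Hk; unfold restrict; destruct excluded_middle_informative as [Hin|]; [|reflexivity].
      destruct Hs as [->|Hs]; [lia|]; apply lt_INR in Hk; lra. }
  apply Series_le; [| apply (ex_series_restrict f f_ge0 f_ex)].
  intros k; pose proof (restrict_bounds f f_ge0 (fun x => 1 <= x <= 1 + eps) k).
  unfold restrict at 1 2; destruct excluded_middle_informative as [Hin|]; [|lra].
  split; [apply f_ge0|].
  destruct k as [|k].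
  - rewrite Nat.add_0_r in *; destruct Hs as [->|]; [rewrite f_0; lra | lra].
  - unfold restrict; destruct excluded_middle_informative as [|Hout].
    + apply shift_le_of_step; lia.
    + exfalso; apply Hout; rewrite plus_INR, S_INR in *; pose proof (pos_INR k); lra.
Qed.

Lemma conc_nonincreasing (eps : R) : 0 <= eps -> conc f eps = Finite (cdf f (1 + eps)).
Proof.
  intros Heps.
  assert (Hfirst : prob f (fun x => 1 <= x <= 1 + eps) = cdf f (1 + eps)).
  { apply Series_ext; intros [|k].
    - simpl; rewrite f_0; do 2 destruct excluded_middle_informative; reflexivity.
    - rewrite S_INR; pose proof (pos_INR k).
      do 2 destruct excluded_middle_informative; try reflexivity; exfalso; lra. }
  apply is_lub_Rbar_unique; split.
  - intros r [x0 ->]; simpl; rewrite <- Hfirst; apply prob_window_le.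
  - intros b Hb; apply Hb; exists 1; symmetry; exact Hfirst.
Qed.

End NonincreasingPmf.

Definition log_norm (p : R) : R := -1 / ln (1 - p).

Lemma ln_1m_lt0 p : 0 < p < 1 -> ln (1 - p) < 0.
Proof. intros Hp; rewrite <- ln_1; apply ln_increasing; lra. Qed.

Lemma log_norm_gt0 p : 0 < p < 1 -> 0 < log_norm p.
Proof.
  intros Hp; pose proof (ln_1m_lt0 p Hp); unfold log_norm.
  replace (-1 / ln (1 - p)) with (/ - ln (1 - p)) by (field; lra).
  apply Rinv_0_lt_compat; lra.
Qed.

Lemma logpmfE p k : logpmf p k = log_norm p * (log_coef k * p ^ k).
Proof. destruct k; unfold logpmf, log_coef, log_norm, Rdiv; ring. Qed.

Section LogPmf.

Variable p : R.
Hypothesis Hp : 0 < p < 1.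

Lemma logpmf_ge0 k : 0 <= logpmf p k.
Proof.
  rewrite logpmfE; pose proof (log_norm_gt0 p Hp); pose proof (log_coef_ge0 k).
  pose proof (pow_le p k ltac:(lra)); apply Rmult_le_pos; [lra|]; nra.
Qed.

Lemma ex_series_logpmf : ex_series (logpmf p).
Proof.
  apply (ex_series_ext (fun k => log_norm p * (log_coef k * p ^ k))).
  { intros; symmetry; apply logpmfE. }
  apply (@ex_series_scal_l R_AbsRing), ex_series_Rabs, CV_disk_inside.
  rewrite CV_radius_log_coef; simpl; rewrite Rabs_pos_eq; lra.
Qed.

Lemma Series_logpmf : Series (logpmf p) = 1.
Proof.
  rewrite (Series_ext _ (fun k => log_norm p * (log_coef k * p ^ k))) by apply logpmfE.
  rewrite Series_scal_l; change (Series _) with (PSeries log_coef p).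
  rewrite PSeries_log_coef by lra.
  pose proof (ln_1m_lt0 p Hp); unfold log_norm; field; lra.
Qed.

Lemma logpmf_step k : (1 <= k)%nat -> logpmf p (S k) <= logpmf p k.
Proof.
  intros Hk; rewrite !logpmfE; destruct k as [|k]; [lia|]; unfold log_coef.
  pose proof (log_norm_gt0 p Hp); apply Rmult_le_compat_l; [lra|].
  set (x := p ^ S k); assert (Hx : 0 <= x) by (apply pow_le; lra).
  assert (Hinv : / INR (S (S k)) <= / INR (S k))
    by (apply Rinv_le_contravar; [apply lt_0_INR; lia | apply le_INR; lia]).
  assert (0 <= / INR (S (S k))) by (apply Rlt_le, Rinv_0_lt_compat, lt_0_INR; lia).
  change (p ^ S (S k)) with (p * x).
  assert (/ INR (S (S k)) * x * (1 - p) >= 0) by (apply Rle_ge, Rmult_le_pos; [apply Rmult_le_pos|]; lra).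
  nra.
Qed.

Lemma logpmf_1_gt0 : 0 < logpmf p 1.
Proof. rewrite logpmfE; simpl; rewrite Rinv_1; pose proof (log_norm_gt0 p Hp); nra. Qed.

Lemma logpmf_2 : logpmf p 2 = p / 2 * logpmf p 1.
Proof. rewrite !logpmfE; simpl; field. Qed.

Lemma conc_logpmf eps : 0 <= eps -> conc (logpmf p) eps = Finite (cdf (logpmf p) (1 + eps)).
Proof.
  apply conc_nonincreasing;
    [exact logpmf_ge0 | exact ex_series_logpmf | reflexivity | exact logpmf_step].
Qed.

End LogPmf.

Lemma logpmf_exp_tilt p q k : 0 < p < 1 -> 0 < q < 1 ->
  logpmf q k = log_norm q / log_norm p * (q / p) ^ k * logpmf p k.
Proof.
  intros Hp Hq; pose proof (log_norm_gt0 p Hp).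
  assert (Hk : (q / p) ^ k = q ^ k / p ^ k)
    by (unfold Rdiv; rewrite Rpow_mult_distr, pow_inv; reflexivity).
  rewrite !logpmfE, Hk; field; split; [apply pow_nonzero |]; lra.
Qed.

Lemma cdf_logpmf_antitone p q : 0 < p < 1 -> 0 < q < 1 -> p <= q ->
  forall t, cdf (logpmf q) t <= cdf (logpmf p) t.
Proof.
  intros Hp Hq Hpq.
  apply (cdf_le_of_exp_tilt (logpmf p) (logpmf q) (logpmf_ge0 p Hp) (logpmf_ge0 q Hq)
           (ex_series_logpmf p Hp) (ex_series_logpmf q Hq)
           ltac:(rewrite !Series_logpmf by assumption; reflexivity)
           (log_norm q / log_norm p) (q / p)).
  - pose proof (log_norm_gt0 p Hp); pose proof (log_norm_gt0 q Hq).
    apply Rdiv_lt_0_compat; lra.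
  - apply Rcomplements.Rle_div_r; lra.
  - intros k; apply logpmf_exp_tilt; assumption.
Qed.

Lemma logpmf_inj_of_cdf p q : 0 < p < 1 -> 0 < q < 1 ->
  (forall t, 1 < t -> cdf (logpmf p) t = cdf (logpmf q) t) -> p = q.
Proof.
  intros Hp Hq Hcdf.
  pose proof (Hcdf (INR 1 + /2) ltac:(simpl; lra)) as H1.
  pose proof (Hcdf (INR 2 + /2) ltac:(simpl; lra)) as H2.
  rewrite !(cdf_partial_sum _ (logpmf_ge0 _ Hp) (ex_series_logpmf _ Hp) 1),
    !(cdf_partial_sum _ (logpmf_ge0 _ Hq) (ex_series_logpmf _ Hq) 1) in H1 by lra.
  rewrite !(cdf_partial_sum _ (logpmf_ge0 _ Hp) (ex_series_logpmf _ Hp) 2),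
    !(cdf_partial_sum _ (logpmf_ge0 _ Hq) (ex_series_logpmf _ Hq) 2) in H2 by lra.
  cbn [sum_f_R0] in H1, H2; rewrite logpmf_2, (logpmf_2 q) in H2 by assumption.
  change (logpmf p 0) with 0 in H1, H2; change (logpmf q 0) with 0 in H1, H2.
  pose proof (logpmf_1_gt0 p Hp).
  apply (Rmult_eq_reg_r (logpmf p 1 / 2)); [rewrite <- H1 in H2 |]; nra.
Qed.

Lemma le_of_cdf_logpmf_le p q : 0 < p < 1 -> 0 < q < 1 ->
  (forall t, 1 < t -> cdf (logpmf q) t <= cdf (logpmf p) t) -> p <= q.
Proof.
  intros Hp Hq Hcdf; destruct (Rle_lt_dec p q) as [|Hqp]; [assumption|].
  enough (p = q) by lra.
  apply logpmf_inj_of_cdf; [assumption | assumption |]; intros t Ht.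
  pose proof (cdf_logpmf_antitone q p Hq Hp (Rlt_le _ _ Hqp) t); pose proof (Hcdf t Ht); lra.
Qed.

Lemma st_le_logpmf_iff_cdf p q : 0 < p < 1 -> 0 < q < 1 ->
  st_le (logpmf p) (logpmf q) <-> forall t, cdf (logpmf q) t <= cdf (logpmf p) t.
Proof.
  intros Hp Hq; apply st_le_iff_cdf; try apply logpmf_ge0; try apply ex_series_logpmf;
    try assumption.
  rewrite !Series_logpmf by assumption; reflexivity.
Qed.

Lemma wd_le_logpmf_iff_cdf p q : 0 < p < 1 -> 0 < q < 1 ->
  wd_le (logpmf p) (logpmf q) <->
  forall t, 1 < t -> cdf (logpmf q) t <= cdf (logpmf p) t.
Proof.
  intros Hp Hq; unfold wd_le; split; intros H t Ht.
  - specialize (H (t - 1) ltac:(lra)).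
    rewrite !conc_logpmf in H by (assumption || lra).
    replace (1 + (t - 1)) with t in H by ring; exact H.
  - rewrite !conc_logpmf by (assumption || lra); apply H; lra.
Qed.

Theorem mainTheorem13 (p q : R) (hp : 0 < p < 1) (hq : 0 < q < 1) :
  (st_le (logpmf p) (logpmf q) <-> p <= q) /\
  (wd_le (logpmf p) (logpmf q) <-> p <= q).
Proof.
  rewrite st_le_logpmf_iff_cdf, wd_le_logpmf_iff_cdf by assumption.
  split; split.
  - intros H; apply le_of_cdf_logpmf_le; [assumption.. | intros t _; apply H].
  - apply cdf_logpmf_antitone; assumption.
  - apply le_of_cdf_logpmf_le; assumption.
  - intros Hpq t _; apply cdf_logpmf_antitone; assumption.
Qed.
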